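(* Let $t_1,\dots,t_n$ be indeterminates and let $C$ be the $n\times n$ matrix with $C_{ii}=0$ and $C_{ij}=\frac{1}{t_i-t_j}$ for $i\ne j$. Then $$\det C=\sum_\pi\prod_{i<j,\ \pi(i)=j}\frac{1}{(t_i-t_j)^2},$$ where the sum is over all perfect matchings $\pi$ of $\{1,\dots,n\}$, i.e. fixed-point-free involutions of $\{1,\dots,n\}$ (the empty sum being $0$ when $n$ is odd). *)

From mathcomp Require Import all_boot all_order all_algebra all_fingroup.
Set Implicit Arguments. Unset Strict Implicit. Unset Printing Implicit Defensive.
Import GRing.Theory.
Local Open Scope ring_scope.

Definition Cmat (F : fieldType) (n : nat) (t : 'I_n -> F) : 'M[F]_n :=
  \matrix_(i, j) (if i == j then 0 else (t i - t j)^-1).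

Definition perfect_matching (n : nat) (s : 'S_n) : bool :=
  [forall i, (s (s i) == i) && (s i != i)].

From mathcomp Require Import all_boot all_order all_algebra all_fingroup.
From mathcomp Require Import ring.
Set Implicit Arguments. Unset Strict Implicit. Unset Printing Implicit Defensive.
Import GRing.Theory.
Local Open Scope ring_scope.

(* Expand det C = sum_s sgn(s) prod_i C_{i,s(i)} (the Leibniz terms).  Terms
   of permutations with a fixed point vanish since C_ii = 0, and the term of a
   perfect matching s is prod_{i < s i} 1/(t_i - t_{s i})^2, because C is
   skew-symmetric and the sign of an involution is (-1)^(number of 2-cycles).
   It remains to see that all other terms cancel.  This is done one point at
   a time: for every k <= n, det C is the sum of the terms of the permutations
   that are involutive on {0, ..., k-1}.  To pass from k to k+1, let x = k;
   every permutation s with x on a cycle of length >= 3 is uniquely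
   s = s' (x y) with s' x = x, i.e. s arises by inserting x into a cycle of s'
   right after y.  For fixed s', the partial fraction identity
     1/((t_y - t_x)(t_x - t_z)) = 1/(t_y - t_z) (1/(t_y - t_x) - 1/(t_z - t_x))
   turns the sum of the terms of all such s into a telescoping sum over the
   admissible insertion sites y, which are permuted by s', so it vanishes. *)

Section InvolutionSign.
Variable n : nat.
Implicit Types (s : 'S_n) (i j : 'I_n).

(* The smaller elements [i < s i] of the 2-cycles of an involution [s]. *)
Definition pairs s := [pred i : 'I_n | (i < s i)%N].

Lemma unpairE s i j : involutive s ->
  (tperm i (s i) * s)%g j = if (j == i) || (j == s i) then j else s j.
Proof.
move=> sK; rewrite permM; case: tpermP => [->|->|/eqP/negPf ji /eqP/negPf jsi].
- by rewrite eqxx sK.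
- by rewrite eqxx orbT.
- by rewrite ji jsi.
Qed.

Lemma unpair_involutive s i : involutive s -> involutive (tperm i (s i) * s)%g.
Proof.
move=> sK j; rewrite !unpairE //.
have [/orP[]/eqP->|/norP[/negPf ji /negPf jsi]] := boolP ((j == i) || (j == s i)).
- by rewrite eqxx.
- by rewrite eqxx orbT.
have -> : (s j == i) = (j == s i) by rewrite -{1}(sK i) (inj_eq (@perm_inj _ s)).
by rewrite (inj_eq (@perm_inj _ s)) ji jsi sK.
Qed.

Lemma card_pairs_unpair s i : involutive s -> (i < s i)%N ->
  #|pairs s| = #|pairs (tperm i (s i) * s)%g|.+1.
Proof.
move=> sK lt_i_si; rewrite (cardD1 i) inE lt_i_si add1n; congr _.+1.
apply: eq_card => j; rewrite !inE unpairE //.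
have [->|ji] := eqVneq j i; first by rewrite ltnn.
have [->|_] := eqVneq j (s i); last by [].
by rewrite ltnn sK ltnNge ltnW.
Qed.

Lemma odd_perm_involution s : involutive s -> odd_perm s = odd #|pairs s|.
Proof.
move Em: #|pairs s| => m; elim: m s Em => [|m IHm] s Em sK.
  suff -> : s = 1%g by rewrite odd_perm1.
  apply/permP => i; rewrite perm1; apply/eqP/negPn/negP => si_i.
  have [lt|gt|/val_inj eq] := ltngtP i (s i).
  - by have := card0_eq Em i; rewrite inE lt.
  - by have := card0_eq Em (s i); rewrite inE sK gt.
  - by rewrite -eq eqxx in si_i.
have /card_gt0P[i] : (0 < #|pairs s|)%N by rewrite Em.
rewrite inE => lt_i_si.
have := card_pairs_unpair sK lt_i_si; rewrite Em => -[Em'].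
have := IHm _ (esym Em') (unpair_involutive i sK).
rewrite odd_permM odd_tperm neq_ltn lt_i_si /= => <-.
by rewrite negbK.
Qed.

End InvolutionSign.

Section PointInsertion.
Variable n : nat.
Implicit Types (s : 'S_n) (i u v : 'I_n).

Definition involutive_below (k : nat) s :=
  [forall i : 'I_n, (i < k)%N ==> (s (s i) == i)].

Lemma involutive_belowP k s :
  reflect (forall i : 'I_n, (i < k)%N -> s (s i) = i) (involutive_below k s).
Proof.
apply: (iffP forallP) => [sK i lt_ik | sK i]; first exact/eqP/(implyP (sK i)).
by apply/implyP => /sK ->.
Qed.

(* The places [v] where a point [x] fixed by [s] may be inserted (as
   s (x v)) so that the result stays involutive below [x]: [v] is not fixed
   and neither [v] nor [s v] lies below [x]. *)
Lemma perfect_matching_involutive s : perfect_matching s -> involutive_below n s.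
Proof.
move/forallP=> pm; apply/involutive_belowP => i _.
by case/andP: (pm i) => /eqP.
Qed.

Definition insertion_site (x : 'I_n) s v := [&& s v != v, (x <= v)%N & (x <= s v)%N].

(* [s] permutes its own insertion sites; this makes the sum over them
   telescope. *)
Lemma insertion_site_perm x s v : s x = x -> involutive_below x s ->
  insertion_site x s (s v) = insertion_site x s v.
Proof.
move=> sx /involutive_belowP sK; rewrite /insertion_site (inj_eq (@perm_inj _ s)).
have [_|_] //= := eqVneq (s v) v.
apply/andP/andP => -[le_x_u le_x_su]; split=> //.
- (* [v < x] would make [s (s v) = v] smaller than [x] *)
  rewrite leqNgt; apply/negP => lt_vx.
  by rewrite (sK v lt_vx) leqNgt lt_vx in le_x_su.
rewrite leqNgt; apply/negP => lt_ssv_x.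
have /perm_inj /perm_inj ssvv := sK _ lt_ssv_x.
by rewrite ssvv ltnNge le_x_u in lt_ssv_x.
Qed.

Section InsertPoint.
Variables (x y : 'I_n) (s' : 'S_n).
Hypothesis s'x : s' x = x.
Let s := (tperm x y * s')%g.

Lemma fixed_eq u : (s' u == x) = (u == x).
Proof. by rewrite -{1}s'x (inj_eq (@perm_inj _ s')). Qed.

Lemma insert_x : s x = s' y. Proof. by rewrite permM tpermL. Qed.
Lemma insert_y : s y = x. Proof. by rewrite permM tpermR. Qed.
Lemma insert_other u : u != x -> u != y -> s u = s' u.
Proof. by move=> ux uy; rewrite permM tpermD // eq_sym. Qed.

Lemma insert_twice i : i != x -> i != y -> s' i != y -> s (s i) = s' (s' i).
Proof.
by move=> ix iy s'iy; rewrite !insert_other // fixed_eq.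
Qed.

Lemma insert_cond_fwd : involutive_below x s -> s (s x) != x ->
  involutive_below x s' && insertion_site x s' y.
Proof.
move=> /involutive_belowP sK ssx.
have s'y_y : s' y != y by apply: contra ssx => /eqP s'yy; rewrite insert_x s'yy insert_y.
have yx : y != x by apply: contra s'y_y => /eqP ->; rewrite s'x.
have zx : s' y != x by rewrite fixed_eq.
have le_xy : (x <= y)%N.
  rewrite leqNgt; apply/negP => /sK; rewrite insert_y insert_x => /eqP.
  exact/negP.
have le_xz : (x <= s' y)%N.
  rewrite leqNgt; apply/negP => /sK; rewrite (insert_other zx s'y_y).
  have [->|wy] := eqVneq (s' (s' y)) y.
    by rewrite insert_y => /eqP; rewrite eq_sym (negPf zx).
  by rewrite insert_other ?fixed_eq // => /perm_inj /eqP; rewrite (negPf wy).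
rewrite /insertion_site s'y_y le_xy le_xz /= andbT.
apply/involutive_belowP => i lt_ix.
have ix : i != x by rewrite neq_ltn lt_ix.
have iy : i != y by rewrite neq_ltn (leq_trans lt_ix le_xy).
have s'iy : s' i != y.
  apply/eqP => s'i; have := sK i lt_ix.
  by rewrite (insert_other ix iy) s'i insert_y => /eqP; rewrite eq_sym (negPf ix).
by rewrite -insert_twice // sK.
Qed.

Lemma insert_cond_bwd : involutive_below x s' -> insertion_site x s' y ->
  involutive_below x s && (s (s x) != x).
Proof.
move=> /involutive_belowP s'K /and3P[s'y_y le_xy le_xz].
have yx : y != x by apply: contra s'y_y => /eqP ->; rewrite s'x.
have zx : s' y != x by rewrite fixed_eq.
rewrite insert_x insert_other // fixed_eq zx andbT.
apply/involutive_belowP => i lt_ix.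
have ix : i != x by rewrite neq_ltn lt_ix.
have iy : i != y by rewrite neq_ltn (leq_trans lt_ix le_xy).
have s'iy : s' i != y.
  by apply/eqP => s'i; move: le_xz; rewrite -s'i s'K // leqNgt lt_ix.
by rewrite insert_twice // s'K.
Qed.

Lemma insert_condE :
  involutive_below x s && (s (s x) != x) =
  involutive_below x s' && insertion_site x s' y.
Proof.
by apply/idP/idP => [/andP[]|/andP[]]; [exact: insert_cond_fwd | exact: insert_cond_bwd].
Qed.

End InsertPoint.
End PointInsertion.

(* Every permutation s is uniquely s' (x y) with s' x = x (namely
   y = s^-1 x); reindex a sum over permutations accordingly. *)
Lemma sum_by_insertion (R : nmodType) n (x : 'I_n) (P : pred 'S_n) (G : 'S_n -> R) :
  \sum_(s | P s) G s =
  \sum_(s' : 'S_n | s' x == x) \sum_(y | P (tperm x y * s')%g) G (tperm x y * s')%g.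
Proof.
have preim (s : 'S_n) : \sum_(y | s y == x) G s = G s.
  rewrite (big_pred1 (s^-1 x)%g) // => y /=.
  by rewrite -{1}(permKV s x) (inj_eq (@perm_inj _ s)).
rewrite -(eq_bigr _ (fun s _ => preim s)) (exchange_big_dep xpredT) //=.
rewrite (eq_bigr (fun y => \sum_(s' | P (tperm x y * s')%g && ((tperm x y * s')%g y == x))
   G (tperm x y * s')%g)); last by move=> y _; apply: (reindex_inj (mulgI (tperm x y))).
rewrite (exchange_big_dep (fun s' : 'S_n => s' x == x)) => [|y s' _]; last first.
  by rewrite permM tpermR => /andP[].
apply: eq_bigr => s' /eqP s'x; apply: eq_bigl => y.
by rewrite permM tpermR s'x eqxx andbT.
Qed.

Lemma partial_fraction (F : fieldType) (a b c : F) : a != b -> a != c -> b != c ->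
  (b - a)^-1 * (a - c)^-1 = (b - c)^-1 * ((b - a)^-1 - (c - a)^-1).
Proof.
move=> ab ac bc.
have ba : b - a != 0 by rewrite subr_eq0 eq_sym.
have ac' : a - c != 0 by rewrite subr_eq0.
have bc' : b - c != 0 by rewrite subr_eq0.
have ca : c - a != 0 by rewrite subr_eq0 eq_sym.
by field; rewrite ba ac' bc' ca.
Qed.

Section LeibnizTerms.
Variables (F : fieldType) (n : nat) (t : 'I_n -> F).
Hypothesis t_inj : injective t.
Implicit Types (s : 'S_n) (i j x y : 'I_n).

Lemma CmatE i j : Cmat t i j = if i == j then 0 else (t i - t j)^-1.
Proof. by rewrite mxE. Qed.

Lemma Cmat_neq i j : i != j -> Cmat t i j = (t i - t j)^-1.
Proof. by rewrite CmatE => /negPf ->. Qed.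

Lemma Cmat_skew i j : Cmat t j i = - Cmat t i j.
Proof.
rewrite !CmatE eq_sym; case: eqP => _; first by rewrite oppr0.
by rewrite -invrN opprB.
Qed.

Lemma Cmat_three_term x y z : y != x -> z != x -> z != y ->
  Cmat t y x * Cmat t x z = Cmat t y z * (Cmat t y x - Cmat t z x).
Proof.
move=> yx zx zy; rewrite !Cmat_neq // 1?eq_sym //.
by apply: partial_fraction; rewrite (inj_eq t_inj) // eq_sym.
Qed.

Definition leibniz_term s := (-1) ^+ s * \prod_i Cmat t i (s i).

Definition leibniz_minor x s := (-1) ^+ s * \prod_(i | i != x) Cmat t i (s i).

Lemma leibniz_insert x y s' : s' x = x -> s' y != y ->
  leibniz_term (tperm x y * s')%g =
  - leibniz_minor x s' * (Cmat t y x - Cmat t (s' y) x).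
Proof.
move=> s'x s'y_y.
have yx : y != x by apply: contra s'y_y => /eqP ->; rewrite s'x.
have zx : s' y != x by rewrite -{1}s'x (inj_eq (@perm_inj _ s')).
rewrite /leibniz_term /leibniz_minor odd_permM odd_tperm eq_sym yx signr_addb expr1.
rewrite (bigD1 x) //= (bigD1 y) //= [in RHS](bigD1 y) //=.
rewrite !permM tpermL tpermR s'x.
rewrite (eq_bigr (fun i => Cmat t i (s' i))); last first.
  by move=> i /andP[ix iy]; rewrite permM tpermD // eq_sym.
rewrite mulN1r mulrA [Cmat t x _ * _]mulrC Cmat_three_term //.
by rewrite !mulNr !mulrA -[_ * _ * _ * (_ - _)]mulrA [_ * (_ - _)]mulrC !mulrA.
Qed.

Lemma insertion_telescope x s' : s' x = x -> involutive_below x s' ->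
  \sum_(y | insertion_site x s' y) (Cmat t y x - Cmat t (s' y) x) = 0.
Proof.
move=> s'x s'K; rewrite sumrB (reindex_inj (@perm_inj _ s')) /=.
by rewrite (eq_bigl _ _ (fun y => insertion_site_perm y s'x s'K)) subrr.
Qed.

Lemma long_cycle_sum x :
  \sum_(s | involutive_below x s && (s (s x) != x)) leibniz_term s = 0.
Proof.
rewrite (sum_by_insertion x); apply: big1 => s' /eqP s'x.
have [s'K|s'NK] := boolP (involutive_below x s'); last first.
  by apply: big_pred0 => y; rewrite insert_condE // (negPf s'NK).
rewrite (eq_bigl _ _ (fun y => insert_condE y s'x)) s'K /=.
rewrite (eq_bigr (fun y => - leibniz_minor x s' * (Cmat t y x - Cmat t (s' y) x))).
  by rewrite -big_distrr /= insertion_telescope // mulr0.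
by move=> y /and3P[s'y_y _ _]; apply: leibniz_insert.
Qed.

Lemma det_involutive_below k : (k <= n)%N ->
  \det (Cmat t) = \sum_(s | involutive_below k s) leibniz_term s.
Proof.
elim: k => [_|k IHk lt_kn].
  by apply: eq_bigl => s; apply/esym/involutive_belowP => i; rewrite ltn0.
pose x := Ordinal lt_kn.
rewrite IHk 1?ltnW // (bigID (fun s => s (s x) == x)) /= (long_cycle_sum x) addr0.
apply: eq_bigl => s.
apply/andP/involutive_belowP => [[/involutive_belowP sK /eqP sKk] i|sK].
  rewrite ltnS leq_eqVlt => /orP[/eqP ik|/sK //].
  by have -> : i = x by apply: val_inj.
split; last exact/eqP/sK.
by apply/involutive_belowP => i /ltnW /sK.
Qed.

Lemma leibniz_fixed_point s i : s i = i -> leibniz_term s = 0.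
Proof. by move=> si; rewrite /leibniz_term (bigD1 i) //= CmatE si eqxx mul0r mulr0. Qed.

Lemma leibniz_matching s : perfect_matching s ->
  leibniz_term s = \prod_(i : 'I_n | (i < s i)%N) ((t i - t (s i)) ^+ 2)^-1.
Proof.
move/forallP => pm.
have sK : involutive s by move=> i; case/andP: (pm i) => /eqP.
have sfree i : s i != i by case/andP: (pm i).
rewrite /leibniz_term (bigID (fun i : 'I_n => (i < s i)%N)) /=.
rewrite [X in _ * (_ * X)](reindex_inj (@perm_inj _ s)) /=.
rewrite [X in _ * (_ * X)](eq_big (fun j : 'I_n => (j < s j)%N) (fun j => - Cmat t j (s j))).
- rewrite prodrN (odd_perm_involution sK) signr_odd mulrCA signrMK -big_split /=.
  by apply: eq_bigr => i _; rewrite Cmat_neq 1?eq_sym ?sfree // -expr2 exprVn.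
- by move=> j; rewrite sK -leqNgt leq_eqVlt eq_sym (negPf (sfree j : s j != j :> nat)).
- by move=> j _; rewrite sK Cmat_skew.
Qed.

End LeibnizTerms.

Theorem mainTheorem19 (F : fieldType) (n : nat) (t : 'I_n -> F)
  (t_inj : injective t) :
  \det (Cmat t) =
  \sum_(s : 'S_n | perfect_matching s)
     \prod_(i : 'I_n | (i < s i)%N) ((t i - t (s i)) ^+ 2)^-1.
Proof.
rewrite (det_involutive_below t_inj (leqnn n)) (bigID (@perfect_matching n)) /=.
rewrite [X in _ + X]big1 ?addr0 => [|s /andP[/involutive_belowP sK]]; last first.
  case/forallPn => i; rewrite negb_and negbK sK // eqxx => /eqP.
  exact: leibniz_fixed_point.
apply: eq_big => [s|s /andP[_ pm]]; last exact: leibniz_matching.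
exact/andb_idl/perfect_matching_involutive.
Qed.
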